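(* Let $V_i\sim\mathcal M[\underline\sigma_i,\overline\sigma_i]$ with $\underline\sigma_i\le\overline\sigma_i$, $i=1,\dots,d$. The following are equivalent: (1) $V_1\dashrightarrow V_2\dashrightarrow\cdots\dashrightarrow V_d$; (2) $V_{i_1}\dashrightarrow V_{i_2}\dashrightarrow\cdots\dashrightarrow V_{i_d}$ for every permutation $(i_1,\dots,i_d)$ of $(1,\dots,d)$; (3) $(V_1,\dots,V_d)\sim\mathcal M\big(\prod_{i=1}^d[\underline\sigma_i,\overline\sigma_i]\big)$.
   Context: Sublinear expectation space $(\Omega,\mathcal H,\hat{\mathbb E})$, $\hat{\mathbb E}[X]=\sup_{Q\in\mathcal P}E_Q[X]$. $C_{b,Lip}$: bounded Lipschitz functions; $C_{l.Lip}(\mathbb R^d)$: $|\varphi(x)-\varphi(y)|\le C(1+|x|^k+|y|^k)|x-y|$. $X\dashrightarrow Y$ means $\hat{\mathbb E}[\varphi(X,Y)]=\hat{\mathbb E}[\hat{\mathbb E}[\varphi(x,Y)]_{x=X}]$ for all $\varphi\in C_{b,Lip}$; $X_1\dashrightarrow\cdots\dashrightarrow X_n$ means $(X_1,\dots,X_i)\dashrightarrow X_{i+1}$ for each $i$. For a compact convex $\Theta\subset\mathbb R^d$, a random vector $\mathbf V\sim\mathcal M(\Theta)$ (maximal distribution) if $\hat{\mathbb E}[\varphi(\mathbf V)]=\max_{\theta\in\Theta}\varphi(\theta)$ for all $\varphi\in C_{l.Lip}(\mathbb R^d)$; $\mathcal M[a,b]$ is the case $d=1$, $\Theta=[a,b]$.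 *)

From HB Require Import structures.
From mathcomp Require Import all_boot all_order all_algebra all_fingroup.
From mathcomp Require Import reals.
Set Implicit Arguments. Unset Strict Implicit. Unset Printing Implicit Defensive.
Import Order.TTheory GRing.Theory Num.Theory.
Local Open Scope ring_scope.

(* Points of R^n are functions 'I_n -> R; we use the l^1 norm
   (all norms on R^n are equivalent, so the Lipschitz classes do not depend on it). *)
Definition normn (R : realType) (n : nat) (x : 'I_n -> R) : R :=
  \sum_(i < n) `|x i|.

Definition subv (R : realType) (n : nat) (x y : 'I_n -> R) : 'I_n -> R :=
  fun i => x i - y i.

Definition lLip (R : realType) (n : nat) (phi : ('I_n -> R) -> R) : Prop :=
  exists (C : R) (k : nat), 0 <= C /\
    forall x y, `|phi x - phi y| <=
      C * (1 + normn x ^+ k + normn y ^+ k) * normn (subv x y).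

Definition bLip (R : realType) (n : nat) (phi : ('I_n -> R) -> R) : Prop :=
  (exists M : R, forall x, `|phi x| <= M) /\
  (exists L : R, forall x y, `|phi x - phi y| <= L * normn (subv x y)).

Record sublinear_expectation (R : realType) (Omega : Type) := SubExp {
  H : (Omega -> R) -> Prop;
  E : (Omega -> R) -> R;
  H_cst : forall c : R, H (fun _ => c);
  H_lLip : forall (n : nat) (X : 'I_n -> Omega -> R) (phi : ('I_n -> R) -> R),
      (forall i, H (X i)) -> lLip phi -> H (fun w => phi (fun i => X i w));
  E_mono : forall X Y, H X -> H Y -> (forall w, X w <= Y w) -> E X <= E Y;
  E_cst : forall c : R, E (fun _ => c) = c;
  E_subadd : forall X Y, H X -> H Y -> E (fun w => X w + Y w) <= E X + E Y;
  E_poshom : forall (l : R) X, 0 <= l -> H X -> E (fun w => l * X w) = l * E X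
}.

Definition joinv (R : realType) (m n : nat) (x : 'I_m -> R) (y : 'I_n -> R)
  : 'I_(m + n) -> R :=
  fun k => match split k with inl i => x i | inr j => y j end.

Definition indep (R : realType) (Omega : Type) (S : sublinear_expectation R Omega)
  (m n : nat) (X : 'I_m -> Omega -> R) (Y : 'I_n -> Omega -> R) : Prop :=
  forall phi : ('I_(m + n) -> R) -> R, bLip phi ->
    E S (fun w => phi (joinv (fun i => X i w) (fun j => Y j w))) =
    E S (fun w => E S (fun w' => phi (joinv (fun i => X i w) (fun j => Y j w')))).

Definition seq_indep (R : realType) (Omega : Type) (S : sublinear_expectation R Omega)
  (d : nat) (V : 'I_d -> Omega -> R) : Prop :=
  forall (k : nat) (hk : (k < d)%N), (0 < k)%N ->
    indep S (fun i : 'I_k => V (widen_ord (ltnW hk) i))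
            (fun _ : 'I_1 => V (Ordinal hk)).

Definition maxdist (R : realType) (Omega : Type) (S : sublinear_expectation R Omega)
  (d : nat) (V : 'I_d -> Omega -> R) (Theta : ('I_d -> R) -> Prop) : Prop :=
  forall phi : ('I_d -> R) -> R, lLip phi ->
    (exists theta, Theta theta /\ E S (fun w => phi (fun i => V i w)) = phi theta) /\
    (forall theta, Theta theta -> phi theta <= E S (fun w => phi (fun i => V i w))).

Definition box (R : realType) (d : nat) (lo hi : 'I_d -> R) : ('I_d -> R) -> Prop :=
  fun theta => forall i, lo i <= theta i <= hi i.

(* If [X -->> Y] with [X ~ M(T1)] and [Y ~ M(T2)], then for a test function [phi]
   E[phi(X, Y)] = E[g(X)] where g(x) = E[phi(x, Y)] = max_{y in T2} phi(x, y),
   hence E[phi(X, Y)] = max_{x in T1} max_{y in T2} phi(x, y) = max_{T1 x T2} phi.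
   Induction on the number of coordinates gives (1) => (3), except that
   independence only tests bounded Lipschitz functions.  Maximality extends to
   C_{l.Lip} because E[(V_i - clamp V_i)^2] = 0, so that (with Young's inequality
   absorbing the polynomial growth of phi) E[phi(V)] = E[phi(clamp V)], and
   phi o clamp is bounded Lipschitz.
   Conversely, every subvector of a vector maximal on a box is maximal on the
   corresponding sub-box, and then both sides of the independence identity for
   (V_1, ..., V_k) and V_(k+1) are the same iterated maximum: (3) => (1).
   Finally (3) is invariant under permutations of the coordinates. *)

From HB Require Import structures.
From mathcomp Require Import all_boot all_order all_algebra all_fingroup.
From mathcomp Require Import reals boolp ring lra.
Import Order.TTheory GRing.Theory Num.Theory.
Set Implicit Arguments. Unset Strict Implicit. Unset Printing Implicit Defensive.
Local Open Scope ring_scope.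

Section Vectors.
Variable R : realType.
Implicit Types (m n : nat).

Definition lipschitz n (L : R) (phi : ('I_n -> R) -> R) : Prop :=
  forall x y, `|phi x - phi y| <= L * normn (subv x y).

Lemma normn_ge0 n (x : 'I_n -> R) : 0 <= normn x.
Proof. by apply: sumr_ge0 => i _; exact: normr_ge0. Qed.

Lemma normn1 (x : 'I_1 -> R) : normn x = `|x ord0|.
Proof. by rewrite /normn big_ord1. Qed.

Lemma normn2 (x : 'I_2 -> R) : normn x = `|x ord0| + `|x ord_max|.
Proof. by rewrite /normn big_ord_recr big_ord1; congr (`|x _| + _); exact: val_inj. Qed.

Lemma normn_subvv n (x : 'I_n -> R) : normn (subv x x) = 0.
Proof. by rewrite /normn big1 // => i _; rewrite /subv subrr normr0. Qed.

Lemma normn_subvC n (x y : 'I_n -> R) : normn (subv x y) = normn (subv y x).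
Proof. by apply: eq_bigr => i _; rewrite /subv distrC. Qed.

Lemma normn_subv_le n (x y : 'I_n -> R) : normn (subv x y) <= normn x + normn y.
Proof. by rewrite /normn -big_split /=; apply: ler_sum => i _; exact: ler_normB. Qed.

Lemma normn_lipschitz n : lipschitz 1 (@normn R n).
Proof.
move=> x y; rewrite mul1r /normn -sumrB; apply: le_trans (ler_norm_sum _ _ _) _.
by apply: ler_sum => i _; exact: ler_dist_dist.
Qed.

Lemma normn_comp_inj_le m n (f : 'I_m -> 'I_n) (x : 'I_n -> R) :
  injective f -> normn (fun i => x (f i)) <= normn x.
Proof.
move=> f_inj; rewrite /normn (bigID (mem (f @: setT))) /=.
have -> : \sum_(i < n | true && (i \in f @: setT)) `|x i| = \sum_(i in f @: setT) `|x i|.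
  by apply: eq_bigl.
rewrite big_imset /=; last by move=> a b _ _; apply: f_inj.
have -> : \sum_(i in [set: 'I_m]) `|x (f i)| = \sum_(i < m) `|x (f i)|.
  by apply: eq_bigl => i; rewrite inE.
rewrite lerDl; exact: sumr_ge0.
Qed.

Lemma joinv_lshift m n (x : 'I_m -> R) (y : 'I_n -> R) i : joinv x y (lshift n i) = x i.
Proof. by rewrite /joinv (unsplitK (inl _ i) : split (lshift n i) = inl i). Qed.

Lemma joinv_rshift m n (x : 'I_m -> R) (y : 'I_n -> R) j : joinv x y (rshift m j) = y j.
Proof. by rewrite /joinv (unsplitK (inr _ j) : split (rshift m j) = inr j). Qed.

Lemma comp_lshift_joinv m n (x : 'I_m -> R) (y : 'I_n -> R) :
  (fun i => joinv x y (lshift n i)) = x.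
Proof. by apply: funext => i; exact: joinv_lshift. Qed.

Lemma comp_rshift_joinv m n (x : 'I_m -> R) (y : 'I_n -> R) :
  (fun j => joinv x y (rshift m j)) = y.
Proof. by apply: funext => j; exact: joinv_rshift. Qed.

Lemma joinv_eta m n (t : 'I_(m + n) -> R) :
  joinv (fun i => t (lshift n i)) (fun j => t (rshift m j)) = t.
Proof.
apply: funext => k; rewrite /joinv.
by case: splitP => j hj; congr t; apply: val_inj; rewrite /= hj.
Qed.

Lemma normn_subv_joinv m n (x x' : 'I_m -> R) (y y' : 'I_n -> R) :
  normn (subv (joinv x y) (joinv x' y')) = normn (subv x x') + normn (subv y y').
Proof.
rewrite /normn big_split_ord /=.
by congr (_ + _); apply: eq_bigr => i _; rewrite /subv ?joinv_lshift ?joinv_rshift.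
Qed.

Lemma joinv_widen d k (v : 'I_d -> R) (hk : (k < d)%N) (hk' : (k + 1 <= d)%N) :
  joinv (fun i : 'I_k => v (widen_ord (ltnW hk) i)) (fun _ : 'I_1 => v (Ordinal hk)) =
  (fun t => v (widen_ord hk' t)).
Proof.
apply: funext => t; rewrite /joinv.
by case: splitP => j hj; congr v; apply: val_inj; rewrite /= hj // (ord1 j) addn0.
Qed.

Lemma lipschitz_joinv_r m n L (phi : ('I_(m + n) -> R) -> R) (x : 'I_m -> R) :
  lipschitz L phi -> lipschitz L (fun y : 'I_n -> R => phi (joinv x y)).
Proof.
move=> phi_lip y y'; have := phi_lip (joinv x y) (joinv x y').
by rewrite normn_subv_joinv normn_subvv add0r.
Qed.

Lemma lipschitz_lLip n L (phi : ('I_n -> R) -> R) : lipschitz L phi -> lLip phi.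
Proof.
move=> phi_lip; exists `|L|, 0%N; split=> // x y; rewrite !expr0.
apply: le_trans (phi_lip x y) _; apply: ler_wpM2r; first exact: normn_ge0.
by apply: le_trans (ler_norm L) _; rewrite ler_peMr //; lra.
Qed.

Lemma bLip_lLip n (phi : ('I_n -> R) -> R) : bLip phi -> lLip phi.
Proof. by case=> _ [L]; exact: lipschitz_lLip. Qed.

Lemma lLip_comp_inj m n (f : 'I_m -> 'I_n) (phi : ('I_m -> R) -> R) :
  injective f -> lLip phi -> lLip (fun v : 'I_n -> R => phi (fun i => v (f i))).
Proof.
move=> f_inj [C [k [C0 phi_loc]]]; exists C, k; split=> // x y.
apply: le_trans (phi_loc _ _) _.
have le_pow (z : 'I_n -> R) : normn (fun i => z (f i)) ^+ k <= normn z ^+ k.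
  by apply: lerXn2r; rewrite ?nnegrE ?normn_ge0 // normn_comp_inj_le.
apply: ler_pM; last exact: normn_comp_inj_le.
- by rewrite mulr_ge0 // !addr_ge0 // exprn_ge0 // normn_ge0.
- exact: normn_ge0.
- by apply: ler_wpM2l => //; apply: lerD; first apply: lerD.
Qed.

Lemma lLip_sqr n L (f : ('I_n -> R) -> R) : lipschitz L f -> lLip (fun x => f x ^+ 2).
Proof.
move=> f_lip; set A := `|f (fun=> 0)|; set L' := `|L|.
have lipL' x y : `|f x - f y| <= L' * normn (subv x y).
  apply: le_trans (f_lip x y) _; apply: ler_wpM2r; [exact: normn_ge0 | exact: ler_norm].
have f_bd x : `|f x| <= A + L' * normn x.
  have := lipL' x (fun=> 0); rewrite (_ : subv x _ = x); last first.
    by apply: funext => i; rewrite /subv subr0.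
  have := ler_normD (f x - f (fun=> 0)) (f (fun=> 0)); rewrite subrK /A; lra.
have A0 : 0 <= A := normr_ge0 _; have L'0 : 0 <= L' := normr_ge0 _.
exists (L' * (2 * A + L')), 1%N; split; first by rewrite mulr_ge0 // addr_ge0 // mulr_ge0.
move=> x y; rewrite !expr1 subr_sqr normrM.
have Nx := normn_ge0 x; have Ny := normn_ge0 y; have Nxy := normn_ge0 (subv x y).
have sum_bd : `|f x + f y| <= 2 * A + L' * (normn x + normn y).
  by apply: le_trans (ler_normD _ _) _; have := f_bd x; have := f_bd y; lra.
have key : 2 * A + L' * (normn x + normn y) <= (2 * A + L') * (1 + normn x + normn y).
  by nra.
apply: le_trans (ler_pM (normr_ge0 _) (normr_ge0 _) (lipL' x y) sum_bd) _.
apply: le_trans (ler_wpM2l (mulr_ge0 L'0 Nxy) key) _.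
by rewrite le_eqVlt; apply/orP; left; apply/eqP; ring.
Qed.

Lemma bLip_comp_nonexpansive m n B (pi : ('I_n -> R) -> 'I_m -> R) (phi : ('I_m -> R) -> R) :
  (forall x, normn (pi x) <= B) ->
  (forall x y, normn (subv (pi x) (pi y)) <= normn (subv x y)) ->
  lLip phi -> bLip (fun x => phi (pi x)).
Proof.
move=> pi_bd pi_lip [C [k [C0 phi_loc]]].
have B0 : 0 <= B := le_trans (normn_ge0 _) (pi_bd (fun=> 0)).
pose K := C * (1 + B ^+ k + B ^+ k).
have K0 : 0 <= K by rewrite mulr_ge0 // !addr_ge0 // exprn_ge0.
have K_lip x y : `|phi (pi x) - phi (pi y)| <= K * normn (subv (pi x) (pi y)).
  apply: le_trans (phi_loc _ _) _; apply: ler_wpM2r; first exact: normn_ge0.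
  have powB z : normn (pi z) ^+ k <= B ^+ k.
    by apply: lerXn2r; rewrite ?nnegrE ?normn_ge0.
  by apply: ler_wpM2l => //; have := powB x; have := powB y; lra.
split; last by exists K => x y; apply: le_trans (K_lip x y) _; exact: ler_wpM2l.
set x0 : 'I_n -> R := fun=> 0.
exists (`|phi (pi x0)| + K * (B + B)) => x.
have le_K : K * normn (subv (pi x) (pi x0)) <= K * (B + B).
  by apply: ler_wpM2l => //; apply: le_trans (normn_subv_le _ _) _; exact: lerD.
have := ler_normD (phi (pi x) - phi (pi x0)) (phi (pi x0)); rewrite subrK.
have := K_lip x x0; lra.
Qed.

Definition clamp (a b t : R) : R := if t < a then a else if b < t then b else t.

Definition clampv n (lo hi x : 'I_n -> R) : 'I_n -> R := fun i => clamp (lo i) (hi i) (x i).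

Lemma clamp_in a b t : a <= b -> a <= clamp a b t <= b.
Proof.
move=> ab; rewrite /clamp; case: ltP => h1; first by rewrite lexx ab.
by case: ltP => h2; apply/andP; split; lra.
Qed.

Lemma clamp_id a b t : a <= t <= b -> clamp a b t = t.
Proof. by case/andP=> h1 h2; rewrite /clamp; case: ltP => h3; [lra | case: ltP => h4 //; lra]. Qed.

Lemma clamp_bound a b t : a <= b -> `|clamp a b t| <= `|a| + `|b|.
Proof.
move=> ab; have /andP[a1 a2] : - `|a| <= a <= `|a| by rewrite -ler_norml.
have /andP[b1 b2] : - `|b| <= b <= `|b| by rewrite -ler_norml.
rewrite ler_norml /clamp; case: ltP => h1; [|case: ltP => h2]; apply/andP; split; lra.
Qed.

Lemma clamp_lip a b x y : a <= b -> `|clamp a b x - clamp a b y| <= `|x - y|.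
Proof.
move=> ab; have /andP[d1 d2] : - `|x - y| <= x - y <= `|x - y| by rewrite -ler_norml.
rewrite ler_norml /clamp; do 4 case: ltP => ?; apply/andP; split; lra.
Qed.

Lemma clamp_sub_lip a b x y : a <= b ->
  `|(x - clamp a b x) - (y - clamp a b y)| <= `|x - y|.
Proof.
move=> ab; have /andP[d1 d2] : - `|x - y| <= x - y <= `|x - y| by rewrite -ler_norml.
rewrite ler_norml /clamp; do 4 case: ltP => ?; apply/andP; split; lra.
Qed.

Lemma lipschitz_sub_clamp (a b : R) : a <= b ->
  lipschitz 1 (fun y : 'I_1 -> R => y ord0 - clamp a b (y ord0)).
Proof. by move=> ab x y; rewrite normn1 mul1r; exact: clamp_sub_lip. Qed.

Lemma clampv_box n (lo hi x : 'I_n -> R) :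
  (forall i, lo i <= hi i) -> box lo hi (clampv lo hi x).
Proof. by move=> lohi i; exact: clamp_in. Qed.

Lemma clampv_id n (lo hi x : 'I_n -> R) : box lo hi x -> clampv lo hi x = x.
Proof. by move=> x_box; apply: funext => i; exact: clamp_id. Qed.

Lemma bLip_comp_clampv n (lo hi : 'I_n -> R) (phi : ('I_n -> R) -> R) :
  (forall i, lo i <= hi i) -> lLip phi -> bLip (fun x => phi (clampv lo hi x)).
Proof.
move=> lohi; apply: (bLip_comp_nonexpansive (B := \sum_(i < n) (`|lo i| + `|hi i|))).
  by move=> x; apply: ler_sum => i _; exact: clamp_bound.
by move=> x y; apply: ler_sum => i _; exact: clamp_lip.
Qed.

Definition is_max_on n (e : R) (phi : ('I_n -> R) -> R) (Theta : ('I_n -> R) -> Prop) :=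
  (exists theta, Theta theta /\ e = phi theta) /\
  (forall theta, Theta theta -> phi theta <= e).

Lemma is_max_on_unique n e e' (phi : ('I_n -> R) -> R) Theta :
  is_max_on e phi Theta -> is_max_on e' phi Theta -> e = e'.
Proof.
move=> [[t [t_in ->]] t_max] [[t' [t'_in ->]] t'_max].
by apply/eqP; rewrite eq_le t_max // t'_max.
Qed.

Lemma box_joinvP m n (lo1 hi1 x : 'I_m -> R) (lo2 hi2 y : 'I_n -> R) :
  box (joinv lo1 lo2) (joinv hi1 hi2) (joinv x y) <-> box lo1 hi1 x /\ box lo2 hi2 y.
Proof.
split=> [xy_box | [x_box y_box] t]; last by rewrite /joinv; case: (split t).
split=> i; [have := xy_box (lshift n i) | have := xy_box (rshift m i)];
  by rewrite ?joinv_lshift ?joinv_rshift.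
Qed.

Lemma box_ord1 (a b : R) : box (fun=> a) (fun=> b) = (fun theta : 'I_1 -> R => a <= theta ord0 <= b).
Proof. by apply: funext => theta; apply: propext; split=> [|h i]; [exact | rewrite (ord1 i)]. Qed.

Lemma is_max_on_joinv m n (lo1 hi1 : 'I_m -> R) (lo2 hi2 : 'I_n -> R) e
    (phi : ('I_(m + n) -> R) -> R) (g : ('I_m -> R) -> R) :
  (forall x, is_max_on (g x) (fun y => phi (joinv x y)) (box lo2 hi2)) ->
  is_max_on e g (box lo1 hi1) -> is_max_on e phi (box (joinv lo1 lo2) (joinv hi1 hi2)).
Proof.
move=> g_max [[x [x_box ->]] x_max]; have [[y [y_box gx]] _] := g_max x.
split; first by exists (joinv x y); split; first exact/box_joinvP.
move=> t; rewrite -[t]joinv_eta => /box_joinvP[t1 t2].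
have [_ /(_ _ t2) le_g] := g_max (fun i => t (lshift n i)).
exact: le_trans le_g (x_max _ t1).
Qed.

End Vectors.

Section SublinearExpectation.
Variables (R : realType) (Omega : Type) (S : sublinear_expectation R Omega).
Implicit Types (X Y : Omega -> R).

Lemma H_comp1 (f : R -> R) L X :
  (forall a b, `|f a - f b| <= L * `|a - b|) -> H S X -> H S (fun w => f (X w)).
Proof.
move=> f_lip HX; apply: (@H_lLip _ _ S 1 (fun=> X) (fun x => f (x ord0))) => //.
by apply: (@lipschitz_lLip _ _ L) => x y; rewrite normn1; exact: f_lip.
Qed.

Lemma H_comp2 (f : R -> R -> R) C X Y : 0 <= C ->
  (forall a b a' b', `|f a b - f a' b'| <=
     C * (1 + (`|a| + `|b|) + (`|a'| + `|b'|)) * (`|a - a'| + `|b - b'|)) ->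
  H S X -> H S Y -> H S (fun w => f (X w) (Y w)).
Proof.
move=> C0 f_loc HX HY.
apply: (@H_lLip _ _ S 2 (fun i => if val i == 0%N then X else Y) (fun x => f (x ord0) (x ord_max))).
  by case=> -[|i] hi.
by exists C, 1%N; split=> // x y; rewrite !expr1 !normn2; exact: f_loc.
Qed.

Lemma H_add X Y : H S X -> H S Y -> H S (fun w => X w + Y w).
Proof.
apply: (@H_comp2 (fun a b => a + b) 1) => // a b a' b'.
rewrite (_ : a + b - (a' + b') = (a - a') + (b - b')); last by ring.
apply: le_trans (ler_normD _ _) _.
have := normr_ge0 a; have := normr_ge0 b; have := normr_ge0 a'; have := normr_ge0 b'.
have := normr_ge0 (a - a'); have := normr_ge0 (b - b'); nra.
Qed.

Lemma H_mul X Y : H S X -> H S Y -> H S (fun w => X w * Y w).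
Proof.
apply: (@H_comp2 (fun a b => a * b) 1) => // a b a' b'.
rewrite (_ : a * b - a' * b' = a * (b - b') + b' * (a - a')); last by ring.
apply: le_trans (ler_normD _ _) _; rewrite !normrM.
have := normr_ge0 a; have := normr_ge0 b; have := normr_ge0 a'; have := normr_ge0 b'.
have := normr_ge0 (a - a'); have := normr_ge0 (b - b'); nra.
Qed.

Lemma H_opp X : H S X -> H S (fun w => - X w).
Proof. by apply: (@H_comp1 _ 1) => a b; rewrite mul1r -opprD normrN. Qed.

Lemma H_sub X Y : H S X -> H S Y -> H S (fun w => X w - Y w).
Proof. by move=> HX /H_opp; exact: H_add. Qed.

Lemma H_abs X : H S X -> H S (fun w => `|X w|).
Proof. by apply: (@H_comp1 _ 1) => a b; rewrite mul1r; exact: ler_dist_dist. Qed.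

Lemma H_exp X k : H S X -> H S (fun w => X w ^+ k).
Proof.
move=> HX; elim: k => [|k IH]; first by under eq_fun do rewrite expr0; exact: H_cst.
by under eq_fun do rewrite exprS; exact: H_mul.
Qed.

Lemma H_sum n (F : 'I_n -> Omega -> R) :
  (forall i, H S (F i)) -> H S (fun w => \sum_(i < n) F i w).
Proof.
elim: n F => [|n IH] F HF; first by under eq_fun do rewrite big_ord0; exact: H_cst.
under eq_fun do rewrite big_ord_recr /=.
by apply: H_add; [exact: IH | exact: HF].
Qed.

Lemma H_normn n (V : 'I_n -> Omega -> R) :
  (forall i, H S (V i)) -> H S (fun w => normn (fun i => V i w)).
Proof. by move=> HV; apply: H_lLip HV _; exact: lipschitz_lLip (@normn_lipschitz R n). Qed.

Lemma E_le_cst X c : H S X -> (forall w, X w <= c) -> E S X <= c.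
Proof. by move=> HX le_c; rewrite -(E_cst S c); exact: E_mono (H_cst S c) le_c. Qed.

Lemma E_ge_cst X c : H S X -> (forall w, c <= X w) -> c <= E S X.
Proof. by move=> HX ge_c; rewrite -(E_cst S c); exact: E_mono (H_cst S c) HX ge_c. Qed.

Lemma normE_le X M : H S X -> (forall w, `|X w| <= M) -> `|E S X| <= M.
Proof.
move=> HX X_bd; rewrite ler_norml; apply/andP; split.
  by apply: E_ge_cst => // w; have := X_bd w; rewrite ler_norml => /andP[].
by apply: E_le_cst => // w; have := X_bd w; rewrite ler_norml => /andP[].
Qed.

Lemma E_le_add_sub X Y : H S X -> H S Y -> E S X <= E S Y + E S (fun w => X w - Y w).
Proof.
move=> HX HY; rewrite addrC.
have {1}-> : X = (fun w => (X w - Y w) + Y w) by apply: funext => w; rewrite subrK.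
exact: E_subadd (H_sub HX HY) HY.
Qed.

Lemma E_sum_le n (F : 'I_n -> Omega -> R) : (forall i, H S (F i)) ->
  E S (fun w => \sum_(i < n) F i w) <= \sum_(i < n) E S (F i).
Proof.
elim: n F => [|n IH] F HF; first by under eq_fun do rewrite big_ord0; rewrite E_cst big_ord0.
under eq_fun do rewrite big_ord_recr /=; rewrite big_ord_recr /=.
apply: le_trans (E_subadd (H_sum (fun i => HF _)) (HF _)) _.
by rewrite lerD2r; exact: IH.
Qed.

Lemma E_eq_of_abs_sub_le0 X Y : H S X -> H S Y ->
  E S (fun w => `|X w - Y w|) <= 0 -> E S X = E S Y.
Proof.
move=> HX HY E0; have Habs := H_abs (H_sub HX HY).
have EXY : E S (fun w => X w - Y w) <= 0.
  by apply: le_trans E0; apply: E_mono (H_sub HX HY) Habs _ => w; exact: ler_norm.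
have EYX : E S (fun w => Y w - X w) <= 0.
  by apply: le_trans E0; apply: E_mono (H_sub HY HX) Habs _ => w; rewrite distrC ler_norm.
have := E_le_add_sub HX HY; have := E_le_add_sub HY HX.
by move=> le1 le2; apply/eqP; rewrite eq_le; apply/andP; split; lra.
Qed.

Lemma young_ineq (M a b : R) : 0 < M -> a * b <= M^-1 * a ^+ 2 + M * b ^+ 2.
Proof.
move=> M0; have := sqr_ge0 (2 * a - M * b); have := sqr_ge0 (M * b).
have : M * (M^-1 * a ^+ 2) = a ^+ 2 by rewrite mulrA mulfV ?mul1r // gt_eqF.
set u := M^-1 * a ^+ 2; rewrite !expr2 => hM h1 h2; nra.
Qed.

Lemma E_mul_abs_le0 X Y : H S X -> H S Y -> E S (fun w => Y w ^+ 2) = 0 ->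
  E S (fun w => X w * `|Y w|) <= 0.
Proof.
move=> HX HY EY2; have HX2 := H_exp 2 HX; have HY2 := H_exp 2 HY.
have E_young M : 0 < M -> E S (fun w => X w * `|Y w|) <= M^-1 * E S (fun w => X w ^+ 2).
  move=> M0; have HM1 := H_mul (H_cst S M^-1) HX2; have HM2 := H_mul (H_cst S M) HY2.
  apply: le_trans (E_mono (H_mul HX (H_abs HY)) (H_add HM1 HM2) _) _.
    by move=> w; rewrite -(real_normK (num_real (Y w))); exact: young_ineq.
  apply: le_trans (E_subadd HM1 HM2) _.
  have iM0 : 0 <= M^-1 by rewrite invr_ge0 ltW.
  by rewrite (E_poshom iM0 HX2) (E_poshom (ltW M0) HY2) EY2 mulr0 addr0.
set K := E S (fun w => X w ^+ 2).
have K0 : 0 <= K by apply: E_ge_cst => // w; exact: sqr_ge0.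
apply/ler_addgt0Pl => e e0; rewrite addr0.
have KM0 : 0 < (K + 1) / e by rewrite divr_gt0 //; lra.
apply: le_trans (E_young _ KM0) _.
rewrite invf_div mulrAC ler_pdivrMr; last lra.
by rewrite mulrDr mulr1 lerDl ltW.
Qed.

End SublinearExpectation.

Section MaximalDistribution.
Variables (R : realType) (Omega : Type) (S : sublinear_expectation R Omega).

Definition joinrv m n (X : 'I_m -> Omega -> R) (Y : 'I_n -> Omega -> R) :
    'I_(m + n) -> Omega -> R :=
  fun t w => joinv (fun i => X i w) (fun j => Y j w) t.

Lemma comp_lshift_joinrv m n (X : 'I_m -> Omega -> R) (Y : 'I_n -> Omega -> R) :
  (fun i => joinrv X Y (lshift n i)) = X.
Proof. by apply: funext => i; apply: funext => w; exact: joinv_lshift. Qed.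

Lemma comp_rshift_joinrv m n (X : 'I_m -> Omega -> R) (Y : 'I_n -> Omega -> R) :
  (fun j => joinrv X Y (rshift m j)) = Y.
Proof. by apply: funext => j; apply: funext => w; exact: joinv_rshift. Qed.

Lemma joinrv_widen d k (V : 'I_d -> Omega -> R) (hk : (k < d)%N) (hk' : (k + 1 <= d)%N) :
  joinrv (fun i : 'I_k => V (widen_ord (ltnW hk) i)) (fun _ : 'I_1 => V (Ordinal hk)) =
  (fun t => V (widen_ord hk' t)).
Proof.
apply: funext => t; apply: funext => w.
exact: (congr1 (fun v => v t) (joinv_widen (fun i => V i w) hk hk')).
Qed.

Definition bmaxdist d (V : 'I_d -> Omega -> R) (Theta : ('I_d -> R) -> Prop) : Prop :=
  forall phi, bLip phi -> is_max_on (E S (fun w => phi (fun i => V i w))) phi Theta.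

Lemma maxdist_bmaxdist d (V : 'I_d -> Omega -> R) Theta :
  maxdist S V Theta -> bmaxdist V Theta.
Proof. by move=> hV phi /bLip_lLip; exact: hV. Qed.

Lemma maxdist_comp_inj d m (V : 'I_d -> Omega -> R) (lo hi : 'I_d -> R) (f : 'I_m -> 'I_d) :
  injective f -> maxdist S V (box lo hi) ->
  maxdist S (fun i => V (f i)) (box (fun i => lo (f i)) (fun i => hi (f i))).
Proof.
move=> f_inj hV phi phi_lLip.
have [[t [t_box Et]] t_max] := hV _ (lLip_comp_inj f_inj phi_lLip).
split=> [|u u_box]; first by exists (fun i => t (f i)); split=> // i; exact: t_box.
pose t' j := if [pick i | f i == j] is Some i then u i else t j.
have -> : u = (fun i => t' (f i)).
  apply: funext => i; rewrite /t'; case: pickP => [i' /eqP/f_inj -> //|].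
  by move/(_ i); rewrite eqxx.
apply: t_max => j; rewrite /t'; case: pickP => [i /eqP <-|_]; [exact: u_box | exact: t_box].
Qed.

Lemma E_joinv_lipschitz m n (Y : 'I_n -> Omega -> R) L (phi : ('I_(m + n) -> R) -> R) :
  (forall j, H S (Y j)) -> lipschitz L phi ->
  lipschitz L (fun x => E S (fun w => phi (joinv x (fun j => Y j w)))).
Proof.
move=> HY phi_lip.
have H_phi x : H S (fun w => phi (joinv x (fun j => Y j w))).
  exact: H_lLip HY (lipschitz_lLip (lipschitz_joinv_r x phi_lip)).
have E_le x x' : E S (fun w => phi (joinv x (fun j => Y j w))) <=
    E S (fun w => phi (joinv x' (fun j => Y j w))) + L * normn (subv x x').
  apply: le_trans (E_le_add_sub (H_phi x) (H_phi x')) _; rewrite lerD2l.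
  apply: E_le_cst => [|w]; first exact: H_sub.
  apply: le_trans (ler_norm _) _; apply: le_trans (phi_lip _ _) _.
  by rewrite normn_subv_joinv normn_subvv addr0.
move=> x x'; have := E_le x x'; have := E_le x' x; rewrite (normn_subvC x').
by rewrite ler_norml => le1 le2; apply/andP; split; lra.
Qed.

Lemma indep_of_maxdist_joinv m n (X : 'I_m -> Omega -> R) (Y : 'I_n -> Omega -> R)
    (lo1 hi1 : 'I_m -> R) (lo2 hi2 : 'I_n -> R) :
  (forall j, H S (Y j)) ->
  maxdist S (joinrv X Y) (box (joinv lo1 lo2) (joinv hi1 hi2)) -> indep S X Y.
Proof.
move=> HY hXY phi [_ [L phi_lip]].
have hX : maxdist S X (box lo1 hi1).
  by have := maxdist_comp_inj (@lshift_inj m n) hXY; rewrite comp_lshift_joinrv !comp_lshift_joinv.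
have hY : maxdist S Y (box lo2 hi2).
  by have := maxdist_comp_inj (@rshift_inj m n) hXY; rewrite comp_rshift_joinrv !comp_rshift_joinv.
have g_max x : is_max_on (E S (fun w => phi (joinv x (fun j => Y j w))))
    (fun y => phi (joinv x y)) (box lo2 hi2).
  exact: hY _ (lipschitz_lLip (lipschitz_joinv_r x phi_lip)).
apply: is_max_on_unique (hXY _ (lipschitz_lLip phi_lip)) _.
apply: is_max_on_joinv g_max _.
exact: hX _ (lipschitz_lLip (E_joinv_lipschitz HY phi_lip)).
Qed.

Lemma seq_indep_of_maxdist d (lo hi : 'I_d -> R) (V : 'I_d -> Omega -> R) :
  (forall i, H S (V i)) -> maxdist S V (box lo hi) -> seq_indep S V.
Proof.
move=> HV hV k hk _; have hk' : (k + 1 <= d)%N by rewrite addn1.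
apply: (indep_of_maxdist_joinv (lo1 := fun i => lo (widen_ord (ltnW hk) i))
  (hi1 := fun i => hi (widen_ord (ltnW hk) i)) (lo2 := fun=> lo (Ordinal hk))
  (hi2 := fun=> hi (Ordinal hk))) => [j|]; first exact: HV.
rewrite (joinv_widen lo hk hk') (joinv_widen hi hk hk') (joinrv_widen V hk hk').
apply: maxdist_comp_inj hV => a b eq_ab; apply: val_inj; exact: (congr1 val eq_ab).
Qed.

Lemma indep0 n (X : 'I_0 -> Omega -> R) (Y : 'I_n -> Omega -> R) : indep S X Y.
Proof.
move=> phi _; have X0 w : (fun i => X i w) = (fun=> 0) by apply: funext => -[].
transitivity (E S (fun w => phi (joinv (fun=> 0) (fun j => Y j w)))).
  by congr (E S); apply: funext => w; rewrite X0.
by rewrite -[LHS](E_cst S); congr (E S); apply: funext => w; rewrite X0.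
Qed.

Lemma bmaxdist0 (V : 'I_0 -> Omega -> R) (lo hi : 'I_0 -> R) : bmaxdist V (box lo hi).
Proof.
move=> phi _; have v0 (v : 'I_0 -> R) : v = (fun=> 0) by apply: funext => -[].
have -> : (fun w => phi (fun i => V i w)) = (fun=> phi (fun=> 0)).
  by apply: funext => w; rewrite (v0 (fun i => V i w)).
rewrite E_cst.
by split=> [|t _]; [exists (fun=> 0); split=> // -[] | rewrite (v0 t)].
Qed.

Lemma bmaxdist_joinv m n (X : 'I_m -> Omega -> R) (Y : 'I_n -> Omega -> R)
    (lo1 hi1 : 'I_m -> R) (lo2 hi2 : 'I_n -> R) :
  (forall j, H S (Y j)) -> indep S X Y ->
  bmaxdist X (box lo1 hi1) -> bmaxdist Y (box lo2 hi2) ->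
  bmaxdist (joinrv X Y) (box (joinv lo1 lo2) (joinv hi1 hi2)).
Proof.
move=> HY XY hX hY phi phi_bLip; have [[M phi_bd] [L phi_lip]] := phi_bLip.
pose g x := E S (fun w => phi (joinv x (fun j => Y j w))).
have g_max x : is_max_on (g x) (fun y => phi (joinv x y)) (box lo2 hi2).
  by apply: hY; split; [exists M => y; exact: phi_bd | exists L; exact: lipschitz_joinv_r].
have g_bLip : bLip g.
  split; last by exists L; exact: E_joinv_lipschitz.
  exists M => x; apply: normE_le => [|w]; last exact: phi_bd.
  exact: H_lLip HY (lipschitz_lLip (lipschitz_joinv_r x phi_lip)).
rewrite /is_max_on (XY phi phi_bLip).
exact: is_max_on_joinv g_max (hX g g_bLip).
Qed.

Lemma bmaxdist_prefix d (lo hi : 'I_d -> R) (V : 'I_d -> Omega -> R) :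
  (forall i, H S (V i)) ->
  (forall i, maxdist S (fun _ : 'I_1 => V i)
                       (fun theta : 'I_1 -> R => lo i <= theta ord0 <= hi i)) ->
  seq_indep S V ->
  forall m (hm : (m <= d)%N), bmaxdist (fun i : 'I_m => V (widen_ord hm i))
    (box (fun i => lo (widen_ord hm i)) (fun i => hi (widen_ord hm i))).
Proof.
move=> HV hV hseq; elim=> [|m IH]; first by move=> hm; exact: bmaxdist0.
rewrite -addn1 => hm; have hk : (m < d)%N by rewrite -addn1.
have XY : indep S (fun i : 'I_m => V (widen_ord (ltnW hk) i)) (fun _ : 'I_1 => V (Ordinal hk)).
  by case: m {IH hm} hk => [|m] hk; [exact: indep0 | exact: hseq].
have hVk : bmaxdist (fun _ : 'I_1 => V (Ordinal hk))
    (box (fun=> lo (Ordinal hk)) (fun=> hi (Ordinal hk))).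
  by rewrite box_ord1; exact: maxdist_bmaxdist.
have := bmaxdist_joinv (fun=> HV _) XY (IH _) hVk.
by rewrite (joinv_widen lo hk hm) (joinv_widen hi hk hm) (joinrv_widen V hk hm).
Qed.

Lemma E_sqr_sub_clamp_eq0 (X : Omega -> R) (a b : R) : a <= b ->
  maxdist S (fun _ : 'I_1 => X) (fun theta : 'I_1 -> R => a <= theta ord0 <= b) ->
  E S (fun w => (X w - clamp a b (X w)) ^+ 2) = 0.
Proof.
move=> ab hX; have [[t [t_in ->]] _] := hX _ (lLip_sqr (lipschitz_sub_clamp ab)).
by rewrite clamp_id // subrr expr0n.
Qed.

Lemma E_comp_clampv d (lo hi : 'I_d -> R) (V : 'I_d -> Omega -> R) (phi : ('I_d -> R) -> R) :
  (forall i, lo i <= hi i) -> (forall i, H S (V i)) ->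
  (forall i, maxdist S (fun _ : 'I_1 => V i)
                       (fun theta : 'I_1 -> R => lo i <= theta ord0 <= hi i)) ->
  lLip phi ->
  E S (fun w => phi (fun i => V i w)) = E S (fun w => phi (clampv lo hi (fun i => V i w))).
Proof.
move=> lohi HV hV phi_lLip.
pose CV i w := clamp (lo i) (hi i) (V i w).
have HCV i : H S (CV i).
  by apply: (H_comp1 (L := 1)) (HV i) => a b; rewrite mul1r; exact: clamp_lip.
have [C [k [C0 phi_loc]]] := phi_lLip.
pose c w := C * (1 + normn (fun i => V i w) ^+ k + normn (fun i => CV i w) ^+ k).
have Hc : H S c.
  exact: H_mul (H_cst S C) (H_add (H_add (H_cst S 1) (H_exp k (H_normn HV)))
                                   (H_exp k (H_normn HCV))).
have Hdist i : H S (fun w => V i w - CV i w) := H_sub (HV i) (HCV i).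
have HcD i := H_mul Hc (H_abs (Hdist i)).
apply: E_eq_of_abs_sub_le0 (H_lLip HV phi_lLip) (H_lLip HCV phi_lLip) _.
apply: le_trans (E_mono _ (H_sum HcD) _) _.
- exact: H_abs (H_sub (H_lLip HV phi_lLip) (H_lLip HCV phi_lLip)).
- by move=> w; rewrite -mulr_sumr; exact: phi_loc.
apply: le_trans (E_sum_le HcD) _; apply: sumr_le0 => i _.
by apply: E_mul_abs_le0 Hc (Hdist i) _; exact: E_sqr_sub_clamp_eq0 (lohi i) (hV i).
Qed.

Lemma maxdist_of_bmaxdist d (lo hi : 'I_d -> R) (V : 'I_d -> Omega -> R) :
  (forall i, lo i <= hi i) -> (forall i, H S (V i)) ->
  (forall i, maxdist S (fun _ : 'I_1 => V i)
                       (fun theta : 'I_1 -> R => lo i <= theta ord0 <= hi i)) ->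
  bmaxdist V (box lo hi) -> maxdist S V (box lo hi).
Proof.
move=> lohi HV hV hVb phi phi_lLip; rewrite (E_comp_clampv lohi HV hV phi_lLip).
have [[t [t_box ->]] t_max] := hVb _ (bLip_comp_clampv lohi phi_lLip).
split=> [|u u_box]; first by exists (clampv lo hi t); split=> //; exact: clampv_box.
by rewrite -(clampv_id u_box); exact: t_max.
Qed.

Lemma maxdist_of_seq_indep d (lo hi : 'I_d -> R) (V : 'I_d -> Omega -> R) :
  (forall i, lo i <= hi i) -> (forall i, H S (V i)) ->
  (forall i, maxdist S (fun _ : 'I_1 => V i)
                       (fun theta : 'I_1 -> R => lo i <= theta ord0 <= hi i)) ->
  seq_indep S V -> maxdist S V (box lo hi).
Proof.
move=> lohi HV hV hseq; apply: maxdist_of_bmaxdist => //.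
have widen_id : widen_ord (leqnn d) = id by apply: funext => i; exact: val_inj.
by have := bmaxdist_prefix HV hV hseq (leqnn d); rewrite widen_id.
Qed.

End MaximalDistribution.

Theorem mainTheorem6 (R : realType) (Omega : Type)
  (S : sublinear_expectation R Omega) (d : nat)
  (lo hi : 'I_d -> R) (V : 'I_d -> Omega -> R) :
  (forall i, lo i <= hi i) ->
  (forall i, H S (V i)) ->
  (forall i, maxdist S (fun _ : 'I_1 => V i)
                       (fun theta : 'I_1 -> R => lo i <= theta ord0 <= hi i)) ->
  [<-> seq_indep S V;
       forall s : 'S_d, seq_indep S (fun k => V (s k));
       maxdist S V (box lo hi)].
Proof.
move=> lohi HV hV; tfae.
- move=> hseq s; apply: (seq_indep_of_maxdist (lo := fun k => lo (s k)) (hi := fun k => hi (s k))).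
    by move=> k; exact: HV.
  exact: maxdist_comp_inj (@perm_inj _ s) (maxdist_of_seq_indep lohi HV hV hseq).
- move=> /(_ 1%g) hseq1; apply: maxdist_of_seq_indep => //.
  by rewrite (_ : V = fun k => V ((1%g : 'S_d) k)) //; apply: funext => k; rewrite perm1.
- exact: seq_indep_of_maxdist.
Qed.
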